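(* Let $H=\mathbb{R}^N$ with the Euclidean inner product $(\cdot,\cdot)$. Let $B$ be a symmetric positive definite $N\times N$ matrix, and let $A = A_1 + A_2$ where $A_1, A_2$ are symmetric positive semidefinite $N\times N$ matrices. For a symmetric positive definite matrix $D$ write $\|z\|_D = (Dz,z)^{1/2}$. Let $\sigma \ge 1/2$ and $\tau>0$ be arbitrary, and let $(\varphi^n)_{n\ge 0}\subset \mathbb{R}^N$ be given. Suppose $(y^n)_{n\ge 0}\subset\mathbb{R}^N$ satisfies the factorized scheme \[ (B + \sigma \tau A_1)\, B^{-1}\, (B + \sigma \tau A_2)\, \frac{y^{n+1} - y^{n}}{\tau} + A y^{n} = \varphi^n, \qquad n = 0,1,2,\dots \] Then the scheme is unconditionally stable (i.e., stable for every $\tau>0$), and for every $n\ge 0$, \[ \|(B + \sigma \tau A_2)\, y^{n+1}\|_{B^{-1}} \le \|(B + \sigma \tau A_2)\, y^{n}\|_{B^{-1}} + \tau \|\varphi^n\|_{B^{-1}}. \]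
   Context: This scheme arises as a two-subdomain domain decomposition (regionally additive) time discretization of $B\,\frac{dy}{dt} + Ay = \varphi(t)$, where $B$ is a finite element mass matrix, $A$ the stiffness matrix, and $A_\alpha$ ($\alpha=1,2$) are the stiffness contributions weighted by a partition of unity $\eta_1+\eta_2=1$ subordinate to overlapping subdomains. $\tau$ is the time step and $\sigma$ a weight parameter ($\sigma=1/2$: Peaceman–Rachford type; $\sigma=1$: Douglas–Rachford type). *)

From HB Require Import structures.
From mathcomp Require Import all_boot all_order all_algebra.
Set Implicit Arguments. Unset Strict Implicit. Unset Printing Implicit Defensive.
Import Order.TTheory GRing.Theory Num.Theory.
Local Open Scope ring_scope.

Definition ip (R : rcfType) (N : nat) (x y : 'cV[R]_N) : R := (x^T *m y) 0 0.

Definition symmetric_mx (R : rcfType) (N : nat) (D : 'M[R]_N) : Prop := D^T = D.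

Definition posdef_mx (R : rcfType) (N : nat) (D : 'M[R]_N) : Prop :=
  symmetric_mx D /\ forall z : 'cV[R]_N, z != 0 -> 0 < ip (D *m z) z.

Definition possemidef_mx (R : rcfType) (N : nat) (D : 'M[R]_N) : Prop :=
  symmetric_mx D /\ forall z : 'cV[R]_N, 0 <= ip (D *m z) z.

Definition mxnorm (R : rcfType) (N : nat) (D : 'M[R]_N) (z : 'cV[R]_N) : R :=
  Num.sqrt (ip (D *m z) z).

From HB Require Import structures.
From mathcomp Require Import all_boot all_order all_algebra.
From mathcomp Require Import ring lra.
Import Order.TTheory GRing.Theory Num.Theory.
Local Open Scope ring_scope.
Set Implicit Arguments. Unset Strict Implicit. Unset Printing Implicit Defensive.

(* With c = sigma tau, C_i = B + c A_i and theta = 1/(2 sigma), the variable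
   v = C_2 y obeys v' = (1 - theta) v + theta T_1 T_2 v + tau B C_1^{-1} phi,
   where T_i = (B - c A_i) C_i^{-1}.  Expanding ||(B + a A) z||^2 in the
   B^{-1}-norm gives (Bz, z) + 2a (Az, z) + a^2 ||Az||^2, which grows with |a|;
   hence each T_i and B C_1^{-1} are contractions, and since theta <= 1 the
   triangle inequality yields the estimate. *)

Section InnerProduct.
Variables (R : rcfType) (N : nat).
Implicit Types (x y z : 'cV[R]_N) (M : 'M[R]_N).

Lemma ipDl x y z : ip (x + y) z = ip x z + ip y z.
Proof. by rewrite /ip linearD /= mulmxDl mxE. Qed.

Lemma ipZl (a : R) x z : ip (a *: x) z = a * ip x z.
Proof. by rewrite /ip linearZ /= -scalemxAl mxE. Qed.

Lemma ipC x y : ip x y = ip y x.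
Proof.
rewrite /ip; have -> : x^T *m y = (y^T *m x)^T by rewrite trmx_mul trmxK.
by rewrite mxE.
Qed.

Lemma ipDr x y z : ip z (x + y) = ip z x + ip z y.
Proof. by rewrite ipC ipDl ipC (ipC y). Qed.

Lemma ipZr (a : R) x z : ip z (a *: x) = a * ip z x.
Proof. by rewrite ipC ipZl ipC. Qed.

Lemma ip_mulmxl M x y : ip (M *m x) y = ip x (M^T *m y).
Proof. by rewrite /ip trmx_mul -mulmxA. Qed.

Lemma ip0l x : ip 0 x = 0.
Proof. by rewrite /ip linear0 mul0mx mxE. Qed.

End InnerProduct.

Section MxNorm.
Variables (R : rcfType) (N : nat) (D : 'M[R]_N).
Hypothesis posD : posdef_mx D.
Implicit Types (x y u v w f : 'cV[R]_N).
Local Notation qf x := (ip (D *m x) x).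

Lemma qf_ge0 x : 0 <= qf x.
Proof.
have [->|x0] := eqVneq x 0; first by rewrite mulmx0 ip0l.
by case: posD => _ /(_ x x0) /ltW.
Qed.

Lemma qf_eq0 x : qf x = 0 -> x = 0.
Proof.
by case: posD => _ pos qx0; apply/eqP; apply: contraT => /pos; rewrite qx0 ltxx.
Qed.

Lemma qfDZ x y (a : R) :
  qf (x + a *: y) = qf x + 2 * a * ip (D *m x) y + a ^+ 2 * qf y.
Proof.
have DxyC : ip (D *m y) x = ip (D *m x) y.
  by case: posD => Ds _; rewrite ip_mulmxl Ds ipC.
rewrite mulmxDr -scalemxAr ipDl !ipDr !ipZl !ipZr DxyC; ring.
Qed.

Lemma cauchy_schwarz_qf x y : ip (D *m x) y ^+ 2 <= qf x * qf y.
Proof.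
have [->|y0] := eqVneq y 0; first by rewrite mulmx0 ip0l ipC ip0l expr2 !mulr0.
have qy_gt0 : 0 < qf y.
  by rewrite lt_def qf_ge0 andbT; apply: contra y0 => /eqP/qf_eq0 ->.
(* the vector qf y * x - (Dx, y) y has qf equal to qf y * (qf x qf y - (Dx, y)^2) *)
have := qf_ge0 (qf y *: x + (- ip (D *m x) y) *: y).
rewrite qfDZ -!scalemxAr !ipZl !ipZr.
set b := ip (D *m x) y; nra.
Qed.

Lemma mxnormD x y : mxnorm D (x + y) <= mxnorm D x + mxnorm D y.
Proof.
have nx := sqrtr_ge0 (qf x); have ny := sqrtr_ge0 (qf y).
rewrite /mxnorm -(ger0_norm (addr_ge0 nx ny)) -sqrtr_sqr.
rewrite ler_sqrt ?sqr_ge0 // -[y]scale1r qfDZ scale1r sqrrD !sqr_sqrtr ?qf_ge0 //.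
have : ip (D *m x) y <= Num.sqrt (qf x) * Num.sqrt (qf y).
  rewrite -sqrtrM ?qf_ge0 // (le_trans (ler_norm _)) // -sqrtr_sqr.
  by rewrite ler_sqrt ?mulr_ge0 ?qf_ge0 ?cauchy_schwarz_qf.
lra.
Qed.

Lemma mxnormZ (a : R) x : mxnorm D (a *: x) = `|a| * mxnorm D x.
Proof.
by rewrite /mxnorm -scalemxAr ipZl ipZr mulrA -expr2 sqrtrM ?sqr_ge0 // sqrtr_sqr.
Qed.

Lemma mxnorm_relaxation_le (theta tau : R) v u w f :
  0 <= theta <= 1 -> 0 <= tau ->
  mxnorm D u <= mxnorm D v -> mxnorm D w <= mxnorm D f ->
  mxnorm D ((1 - theta) *: v + theta *: u + tau *: w) <= mxnorm D v + tau * mxnorm D f.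
Proof.
move=> /andP[theta_ge0 theta_le1] tau_ge0 uv wf.
apply: le_trans (mxnormD _ _) _; apply: lerD; last first.
  by rewrite mxnormZ ger0_norm ?ler_wpM2l.
apply: le_trans (mxnormD _ _) _.
rewrite !mxnormZ !ger0_norm ?subr_ge0 //.
have := ler_wpM2l theta_ge0 uv; lra.
Qed.

End MxNorm.

Section PosdefMatrices.
Variables (R : rcfType) (N : nat).
Implicit Types (B A : 'M[R]_N).

Lemma posdef_unitmx B : posdef_mx B -> B \in unitmx.
Proof.
case=> Bs Bpos; rewrite unitmxE unitfE; apply/negP => /det0P [v v0 vB0].
have vT0 : v^T != 0 by apply: contra v0 => /eqP vT0; rewrite -(trmxK v) vT0 linear0.
have BvT0 : B *m v^T = 0 by rewrite -Bs -trmx_mul vB0 linear0.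
by have := Bpos _ vT0; rewrite BvT0 ip0l ltxx.
Qed.

Lemma posdef_invmx B : posdef_mx B -> posdef_mx (invmx B).
Proof.
move=> posB; have uB := posdef_unitmx posB; case: (posB) => Bs Bpos; split.
  by rewrite /symmetric_mx trmx_inv Bs.
move=> z z0; set u := invmx B *m z.
have zBu : z = B *m u by rewrite /u mulmxA mulmxV // mul1mx.
have u0 : u != 0 by apply: contra z0 => /eqP u0; rewrite zBu u0 mulmx0.
by rewrite [in X in _ < X]zBu ipC; apply: Bpos.
Qed.

Lemma posdef_addZ B A (c : R) :
  posdef_mx B -> possemidef_mx A -> 0 <= c -> posdef_mx (B + c *: A).
Proof.
case=> Bs Bpos [As Apos] c0; split.
  by rewrite /symmetric_mx linearD linearZ /= Bs As.
move=> z z0; rewrite mulmxDl -scalemxAl ipDl ipZl.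
exact: ltr_wpDr (mulr_ge0 c0 (Apos z)) (Bpos z z0).
Qed.

Lemma mxnorm_invmx_addZ_le B A (a c : R) z :
  posdef_mx B -> possemidef_mx A -> `|a| <= c ->
  mxnorm (invmx B) ((B + a *: A) *m z) <= mxnorm (invmx B) ((B + c *: A) *m z).
Proof.
move=> posB [_ Apos] ac; have posBi := posdef_invmx posB.
have BiBK : invmx B *m (B *m z) = z by rewrite mulmxA mulVmx ?mul1mx ?posdef_unitmx.
have qf_shift (b : R) : ip (invmx B *m ((B + b *: A) *m z)) ((B + b *: A) *m z)
    = ip (B *m z) z + 2 * b * ip (A *m z) z
      + b ^+ 2 * ip (invmx B *m (A *m z)) (A *m z).
  by rewrite mulmxDl -scalemxAl qfDZ // BiBK ipC (ipC z).
rewrite /mxnorm ler_sqrt ?qf_ge0 // !qf_shift.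
have Az0 := Apos z; have AAz0 := qf_ge0 posBi (A *m z).
have a_le : a <= c := le_trans (ler_norm a) ac.
have a2_le : a ^+ 2 <= c ^+ 2.
  by rewrite -real_normK ?num_real // lerXn2r ?nnegrE // (le_trans _ ac).
have := ler_wpM2r Az0 a_le; have := ler_wpM2r AAz0 a2_le; lra.
Qed.

End PosdefMatrices.

Section SplittingScheme.
Variables (R : rcfType) (N : nat) (B A1 A2 : 'M[R]_N).
Implicit Types (y p : 'cV[R]_N).

Lemma scheme_increment (C1 C2 : 'M[R]_N) (tau : R) (y0 y1 f : 'cV[R]_N) :
  B \in unitmx -> C1 \in unitmx -> tau != 0 ->
  C1 *m invmx B *m C2 *m (tau^-1 *: (y1 - y0)) + (A1 + A2) *m y0 = f ->
  C2 *m y1 = C2 *m y0 + tau *: (B *m (invmx C1 *m (f - (A1 + A2) *m y0))).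
Proof.
move=> uB uC1 tau0 <-; rewrite addrK -!mulmxA mulKmx // mulKVmx // -scalemxAr.
by rewrite mulmxBr scalerA mulfV // scale1r addrC subrK.
Qed.

Lemma splitting_reflection (c : R) y p :
  (B + c *: A1) *m p = (A1 + A2) *m y ->
  (B - c *: A1) *m (y - c *: p) = (B + c *: A2) *m y - (2 * c) *: (B *m p).
Proof.
move=> hp; rewrite !mulmxDl !mulmxBr !mulNmx -!scalemxAl -!scalemxAr opprK.
have -> : c *: (A1 *m p) = A1 *m y + A2 *m y - B *m p.
  by rewrite -mulmxDl -hp mulmxDl -scalemxAl addrC addKr.
by apply/matrixP => i j; rewrite !mxE; ring.
Qed.

Lemma splitting_shift (c : R) y p :
  (B + c *: A1) *m p = (A1 + A2) *m y ->
  (B + c *: A1) *m (y - c *: p) = (B - c *: A2) *m y.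
Proof.
move=> hp; rewrite mulmxBr -scalemxAr hp !mulmxDl mulNmx -!scalemxAl.
by rewrite scalerDr opprD addrA addrK.
Qed.

Lemma splitting_transition (sigma tau : R) y0 y1 f p r :
  B \in unitmx -> B + (sigma * tau) *: A1 \in unitmx -> sigma != 0 -> tau != 0 ->
  (B + (sigma * tau) *: A1) *m invmx B *m (B + (sigma * tau) *: A2)
    *m (tau^-1 *: (y1 - y0)) + (A1 + A2) *m y0 = f ->
  (B + (sigma * tau) *: A1) *m p = (A1 + A2) *m y0 ->
  (B + (sigma * tau) *: A1) *m r = f ->
  (B + (sigma * tau) *: A2) *m y1 =
    (1 - (2 * sigma)^-1) *: ((B + (sigma * tau) *: A2) *m y0)
    + (2 * sigma)^-1 *: ((B - (sigma * tau) *: A1) *m (y0 - (sigma * tau) *: p))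
    + tau *: (B *m r).
Proof.
move=> uB uC1 sigma0 tau0 scheme C1p C1r.
rewrite (scheme_increment uB uC1 tau0 scheme) (splitting_reflection C1p).
rewrite -C1r -C1p -mulmxBr mulKmx // mulmxBr.
move: (_ *m y0) (B *m p) (B *m r) => v Bp Br.
by apply/matrixP => i j; rewrite !mxE; field.
Qed.

End SplittingScheme.

Theorem mainTheorem1 (R : rcfType) (N : nat)
  (B A1 A2 : 'M[R]_N) (sigma tau : R)
  (phi y : nat -> 'cV[R]_N) :
  posdef_mx B -> possemidef_mx A1 -> possemidef_mx A2 ->
  1 / 2 <= sigma -> 0 < tau ->
  (forall n : nat,
     (B + (sigma * tau) *: A1) *m invmx B *m (B + (sigma * tau) *: A2)
       *m (tau^-1 *: (y n.+1 - y n))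
     + (A1 + A2) *m y n = phi n) ->
  forall n : nat,
    mxnorm (invmx B) ((B + (sigma * tau) *: A2) *m y n.+1)
    <= mxnorm (invmx B) ((B + (sigma * tau) *: A2) *m y n)
       + tau * mxnorm (invmx B) (phi n).
Proof.
move=> posB psdA1 psdA2 sigma_ge tau_gt0 scheme n.
set c := sigma * tau; set C1 := B + c *: A1.
have sigma0 : sigma != 0 by apply/eqP; lra.
have tau0 : tau != 0 by rewrite gt_eqF.
have c_ge0 : 0 <= c by rewrite mulr_ge0 //; lra.
have uC1 : C1 \in unitmx by apply/posdef_unitmx/posdef_addZ.
set p := invmx C1 *m ((A1 + A2) *m y n); set r := invmx C1 *m phi n.
have C1p : C1 *m p = (A1 + A2) *m y n by rewrite mulKVmx.
have nc : `|- c| <= c by rewrite normrN ger0_norm.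
rewrite (splitting_transition (posdef_unitmx posB) uC1 sigma0 tau0 (scheme n) C1p
  (mulKVmx uC1 _)).
apply: mxnorm_relaxation_le; first exact: posdef_invmx.
- by rewrite invr_ge0 invf_le1; lra.
- exact: ltW.
- apply: (le_trans (y := mxnorm (invmx B) ((B - c *: A2) *m y n))).
    rewrite -scaleNr -(splitting_shift C1p).
    exact: (mxnorm_invmx_addZ_le (y n - c *: p) posB psdA1 nc).
  rewrite -scaleNr; exact: (mxnorm_invmx_addZ_le (y n) posB psdA2 nc).
- have n0 : `|0 : R| <= c by rewrite normr0.
  have := mxnorm_invmx_addZ_le r posB psdA1 n0.
  by rewrite scale0r addr0 mulKVmx.
Qed.
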